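(* Let $N\ge1$ and $1\le\sigma_N\le CN^{1/2}$. Define $c_d=Z_N^{-1}e^{-d^2/4\sigma_N^2}$ if $N+d$ is even and $|d|\le\sigma_N^2$, and $c_d=0$ otherwise, with $Z_N>0$ such that $\sum_{|d|\le\sigma_N^2}|c_d|^2=1$. Then: (1) for every $n\in\mathbb N$ there is $C_n$ independent of $N$ and $\sigma_N$ with $\sum_{-\sigma_N^2\le d\le\sigma_N^2}d^{2n}|c_d|^2\le C_n\sigma_N^{2n}$, and $\sum_{-\sigma_N^2\le d\le\sigma_N^2}d^{2n+1}|c_d|^2=0$; (2) for every even integer $\kappa\in2\mathbb Z$ there is $C$ (depending on $\kappa$, not on $N,\sigma_N$) with $\Big|\sum_{-\sigma_N^2\le d\le\sigma_N^2-\kappa}c_dc_{d+\kappa}-1\Big|\le\frac{C}{\sigma_N^2}$.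
   Context: Here $d$ ranges over integers. *)

From HB Require Import structures.
From mathcomp Require Import all_boot all_order all_algebra.
From mathcomp Require Import all_classical all_reals all_analysis.
Set Implicit Arguments. Unset Strict Implicit. Unset Printing Implicit Defensive.
Import Order.TTheory GRing.Theory Num.Theory.
Local Open Scope ring_scope.

(* zsum a b F = \sum_{d = a}^{b} F d  over the integers a <= d <= b
   (empty sum, i.e. 0, when b < a). *)
Definition zsum {R : realType} (a b : int) (F : int -> R) : R :=
  \sum_(k < `|b - a|.+1 | a <= b) F (a + k%:Z).

(* floor(sigma^2): integer d satisfies -sigma^2 <= d <= sigma^2 iff |d| <= M *)
Definition Msig {R : realType} (s : R) : int := Num.floor (s ^+ 2).

Definition cw {R : realType} (N : nat) (s : R) (d : int) : R :=
  if ((2 %| (N%:Z + d))%Z && ((`|d|%:~R : R) <= s ^+ 2))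
  then expR (- ((d%:~R) ^+ 2) / (4 * s ^+ 2)) else 0.

Definition ZN {R : realType} (N : nat) (s : R) : R :=
  Num.sqrt (zsum (- Msig s) (Msig s) (fun d => `|cw N s d| ^+ 2)).

Definition cN {R : realType} (N : nat) (s : R) (d : int) : R :=
  (ZN N s)^-1 * cw N s d.

From HB Require Import structures.
From mathcomp Require Import all_boot all_order all_algebra.
From mathcomp Require Import all_classical all_reals all_analysis.
From mathcomp Require Import zify ring lra.
Set Implicit Arguments. Unset Strict Implicit. Unset Printing Implicit Defensive.
Import Order.TTheory GRing.Theory Num.Theory.
Local Open Scope ring_scope.

(* The weights form a discrete Gaussian of variance [s^2] on one parity class of the window
   [|d| <= s^2], so [ZN^2 = sum_d cw_d^2] is of order [s]: for [0 <= d < s] the pair [{d, d+1}]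
   contributes at least [1/2].  Writing [|d| = s x], even moments follow from
   [x^(2n) <= (2n)! e^x] and [e^(x - x^2/2) <= e^4 e^(-x^2/2) + e^(-x)], whose last term sums
   geometrically to [O(s)]; odd moments vanish by the symmetry [d -> -d].
   For a shift [kappa = 2k], [cw_d cw_(d+2k) = e^(-k^2/2s^2) g(d+k)] with [g x = e^(-x^2/2s^2)]
   as long as [d + 2k] stays in the window; averaging the shifts [k] and [-k] and using
   [cosh >= 1] gives [sum g(d+k) >= e^(-k^2/2s^2) ZN^2], hence the overlap is at least
   [(1 - k^2/s^2) ZN^2 - O(1/s^2)], while AM-GM bounds it by [ZN^2]. *)

Section IntegerRangeSums.
Variable R : realType.
Implicit Types (a b c j : int) (F G : int -> R).

Lemma zsumE a b F :
  zsum a b F = \sum_(k < (absz (b - a)%R).+1 | a <= b) F (a + k%:Z).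
Proof. by []. Qed.

Lemma zsum_count a b F : a <= b + 1 ->
  zsum a b F = \sum_(k < absz (b + 1 - a)%R) F (a + k%:Z).
Proof.
move=> hab; rewrite zsumE; case: (ltrP b a) => hba.
  rewrite (_ : absz (b + 1 - a)%R = 0)%N; last by lia.
  by rewrite big_ord0 big_pred0 // => k; apply/negbTE; rewrite -ltNge.
by rewrite (_ : absz (b + 1 - a)%R = (absz (b - a)%R).+1)%N //; lia.
Qed.

Lemma zsum_split a c b F : a <= c + 1 -> c <= b ->
  zsum a b F = zsum a c F + zsum (c + 1) b F.
Proof.
move=> hac hcb; rewrite !zsum_count; try lia.
rewrite (_ : absz (b + 1 - a)%R = absz (c + 1 - a)%R + absz (b + 1 - (c + 1))%R)%N; last by lia.
rewrite big_split_ord /=; congr (_ + _); apply: eq_bigr => k _; congr F; lia.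
Qed.

Lemma zsum_shift a b j F :
  zsum a b (fun d => F (d + j)) = zsum (a + j) (b + j) F.
Proof.
rewrite !zsumE lerD2r (_ : b + j - (a + j) = b - a); last by ring.
by apply: eq_bigr => k _; rewrite addrAC.
Qed.

Lemma zsum_opp a b F : zsum a b (fun d => F (- d)) = zsum (- b) (- a) F.
Proof.
rewrite !zsumE lerN2 (_ : - a - - b = b - a); last by ring.
rewrite (reindex_inj rev_ord_inj) /=; apply: eq_bigr => k hab.
congr F; have := ltn_ord k; lia.
Qed.

Lemma zsum_eq0 a b F : (forall d, a <= d <= b -> F d = 0) -> zsum a b F = 0.
Proof.
by move=> hF; rewrite zsumE big1 // => k hab; apply: hF; have := ltn_ord k; lia.
Qed.

Lemma eq_zsum a b F G : F =1 G -> zsum a b F = zsum a b G.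
Proof. by move=> eFG; apply: eq_bigr => k _; rewrite eFG. Qed.

Lemma zsumD a b F G : zsum a b (fun d => F d + G d) = zsum a b F + zsum a b G.
Proof. exact: big_split. Qed.

Lemma zsumMr a b F (x : R) : zsum a b (fun d => F d * x) = zsum a b F * x.
Proof. by rewrite /zsum mulr_suml. Qed.

Lemma zsum_const a b (x : R) : a <= b + 1 -> zsum a b (fun=> x) = (b + 1 - a)%:~R * x.
Proof.
move=> hab; rewrite zsum_count // sumr_const card_ord -mulr_natl.
by rewrite -[in RHS](@gez0_abs (b + 1 - a)) ?subr_ge0.
Qed.

Lemma ler_zsum a b F G : (forall d, a <= d <= b -> F d <= G d) ->
  zsum a b F <= zsum a b G.
Proof.
by move=> hFG; apply: ler_sum => k hab; apply: hFG; have := ltn_ord k; lia.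
Qed.

Lemma zsum_ge0 a b F : (forall d, a <= d <= b -> 0 <= F d) -> 0 <= zsum a b F.
Proof.
by move=> hF; apply: sumr_ge0 => k hab; apply: hF; have := ltn_ord k; lia.
Qed.

Lemma ler_zsum_widen a b a' b' F : (forall d, a' <= d <= b' -> 0 <= F d) ->
  a' <= a -> b <= b' -> zsum a b F <= zsum a' b' F.
Proof.
move=> hF ha hb; case: (ltrP b a) => hab.
  by rewrite zsum_eq0 ?zsum_ge0 // => d; lia.
rewrite (@zsum_split a' (a - 1) b') ?subrK; try lia.
rewrite (@zsum_split a b b'); try lia.
rewrite addrCA lerDl addr_ge0 ?zsum_ge0 // => d hd; apply: hF; lia.
Qed.

Lemma zsum_widenr a b b' F :
  (forall d, a <= d -> b < d -> F d = 0) -> (forall d, a <= d -> b' < d -> F d = 0) ->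
  zsum a b F = zsum a b' F.
Proof.
wlog hbb : b b' / b <= b' => [W hb hb'|hb _].
  by case: (lerP b b') => h; [|symmetry]; apply: W => //; apply: ltW.
case: (ltrP b a) => hab.
  by rewrite !zsum_eq0 // => d hd; apply: hb; lia.
rewrite (@zsum_split a b b'); try lia.
by rewrite [X in _ + X]zsum_eq0 ?addr0 // => d hd; apply: hb; lia.
Qed.

Lemma zsum_odd (m : int) F : (forall d, F (- d) = - F d) -> zsum (- m) m F = 0.
Proof.
move=> hF; have h : zsum (- m) m (fun d => F (- d)) = - zsum (- m) m F.
  by rewrite /zsum -sumrN; apply: eq_bigr => k _; rewrite hF.
by move: h; rewrite zsum_opp opprK; lra.
Qed.

End IntegerRangeSums.

Section GaussianFactor.
Variable R : realType.
Implicit Types s x y : R.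

Definition gauss s x : R := expR (- x ^+ 2 / (2 * s ^+ 2)).

Lemma gauss_ge0 s x : 0 <= gauss s x.
Proof. exact: expR_ge0. Qed.

Lemma gaussN s x : gauss s (- x) = gauss s x.
Proof. by rewrite /gauss sqrrN. Qed.

Lemma gauss_le1 s x : gauss s x <= 1.
Proof.
by rewrite expR_le1 mulNr oppr_le0 divr_ge0 ?sqr_ge0 // mulr_ge0 // sqr_ge0.
Qed.

Lemma gauss_ge_half s x : 0 < s -> `|x| <= s -> 1 / 2 <= gauss s x.
Proof.
move=> s0 xs; apply: le_trans (expR_ge1Dx _).
have s2 : 0 < s ^+ 2 by rewrite exprn_gt0.
have : x ^+ 2 <= s ^+ 2.
  by rewrite -real_normK ?num_real //; have := normr_ge0 x; nra.
rewrite mulNr invfM mulrA => hxs.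
have : x ^+ 2 / 2 / s ^+ 2 <= 1 / 2 by rewrite ler_pdivrMr //; lra.
lra.
Qed.

Lemma sqr_gauss_ge s x : 0 < s -> 1 - x ^+ 2 / s ^+ 2 <= gauss s x ^+ 2.
Proof.
move=> s0; rewrite -expRM_natl (_ : 2%:R * _ = - (x ^+ 2 / s ^+ 2)).
  exact: expR_ge1Dx.
by field; rewrite gt_eqF.
Qed.

(* [gauss s (x +- y) = gauss s x * gauss s y * e^(-+ x y / s^2)], and [cosh >= 1]. *)
Lemma gauss_shift_pair s x y : 0 < s ->
  2 * (gauss s y * gauss s x) <= gauss s (x + y) + gauss s (x - y).
Proof.
move=> s0; set P := gauss s y * gauss s x; set u := x * y / s ^+ 2.
have s_neq0 : s != 0 by rewrite gt_eqF.
have -> : gauss s (x + y) = P * expR (- u).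
  by rewrite /P /gauss -!expRD; congr expR; rewrite /u; field.
have -> : gauss s (x - y) = P * expR u.
  by rewrite /P /gauss -!expRD; congr expR; rewrite /u; field.
have P0 : 0 <= P by rewrite mulr_ge0 ?gauss_ge0.
have := expR_ge1Dx u; have := expR_ge1Dx (- u); nra.
Qed.

Lemma gauss_tail s x : 0 < s -> s ^+ 2 / 2 <= `|x| -> gauss s x <= expR (- s ^+ 2 / 8).
Proof.
move=> s0 hx; have s2 : 0 < s ^+ 2 by rewrite exprn_gt0.
rewrite ler_expR !mulNr lerN2 ler_pdivlMr ?mulr_gt0 //.
rewrite -(real_normK (num_real x)).
have : (s ^+ 2 / 2) ^+ 2 <= `|x| ^+ 2 by rewrite ler_sqr ?nnegrE //; lra.
nra.
Qed.

Lemma pow_le_fact_expR x (k : nat) : 0 <= x -> x ^+ k <= k`!%:R * expR x.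
Proof.
move=> x0; case: k => [|k]; first by rewrite expr0 mul1r; have := expR_ge1Dx x; lra.
have f0 : 0 < (k.+1)`!%:R :> R by rewrite ltr0n fact_gt0.
by rewrite mulrC -ler_pdivrMr //; have := expR_ge1Dxn k x0; lra.
Qed.

(* [x - x^2/2 <= -x] once [x >= 4]. *)
Lemma expR_mul_gauss_le x : 0 <= x ->
  expR x * expR (- x ^+ 2 / 2) <= expR 4 * expR (- x ^+ 2 / 2) + expR (- x).
Proof.
move=> x0; have g0 := expR_ge0 (- x ^+ 2 / 2); have e0 := expR_ge0 (- x).
case: (lerP x 4) => hx.
  have : expR x <= expR 4 by rewrite ler_expR.
  nra.
rewrite -expRD; have : expR (x + - x ^+ 2 / 2) <= expR (- x) by rewrite ler_expR; nra.
have := mulr_ge0 (expR_ge0 4) g0; lra.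
Qed.

Lemma sqr_mul_expR_le y : 0 <= y -> y ^+ 2 * expR (- y / 8) <= 256.
Proof.
move=> y0; have h1 : y / 16 <= expR (y / 16) by have := expR_ge1Dx (y / 16); lra.
have h2 : (y / 16) ^+ 2 <= expR (y / 8).
  rewrite (_ : y / 8 = 2%:R * (y / 16)); last by field.
  by rewrite expRM_natl ler_sqr ?nnegrE ?expR_ge0 //; lra.
have h3 : expR (- y / 8) * expR (y / 8) = 1 by rewrite -expRD mulNr addNr expR0.
have := expR_ge0 (- y / 8); nra.
Qed.

End GaussianFactor.

Section Coefficients.
Variables (R : realType) (N : nat) (s : R).
Implicit Types d j : int.

Local Notation M := (Msig s).

Definition supp_cw d : bool := (2 %| (N%:Z + d))%Z && ((`|d|%:~R : R) <= s ^+ 2).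

Lemma cwE d : cw N s d = if supp_cw d then expR (- (d%:~R) ^+ 2 / (4 * s ^+ 2)) else 0.
Proof. by []. Qed.

Lemma cw_ge0 d : 0 <= cw N s d.
Proof. by rewrite cwE; case: ifP => // _; apply: expR_ge0. Qed.

Lemma cw_sqr d : 0 < s -> cw N s d ^+ 2 = if supp_cw d then gauss s d%:~R else 0.
Proof.
move=> s0; rewrite cwE; case: ifP => _; last by rewrite expr0n.
by rewrite /gauss -expRM_natl; congr expR; field; rewrite gt_eqF.
Qed.

Lemma supp_cwN d : supp_cw (- d) = supp_cw d.
Proof. by rewrite /supp_cw normrN; congr (_ && _); apply/idP/idP; lia. Qed.

Lemma cwN d : cw N s (- d) = cw N s d.
Proof. by rewrite !cwE supp_cwN intrN sqrrN. Qed.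

Lemma Msig_ge0 : 0 <= M.
Proof. by rewrite /Msig floor_ge0 sqr_ge0. Qed.

Lemma cw_out d : M < `|d| -> cw N s d = 0.
Proof.
rewrite cwE /supp_cw /Msig => hd; case: ifP => // /andP[_].
by rewrite -floor_ge_int leNgt hd.
Qed.

Definition ZN2 : R := zsum (- M) M (fun d => cw N s d ^+ 2).

Lemma ZN_sqrt : ZN N s = Num.sqrt ZN2.
Proof.
by rewrite /ZN; congr Num.sqrt; apply: eq_zsum => d; rewrite ger0_norm ?cw_ge0.
Qed.

(* One of two consecutive integers has the parity of [N]. *)
Lemma cw_sqr_pair_ge d : 1 <= s -> 0 <= d -> (d + 1)%:~R <= s ->
  1 / 2 <= cw N s d ^+ 2 + cw N s (d + 1) ^+ 2.
Proof.
move=> s1 d0 hd; have s0 : 0 < s by lra.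
have sq : s <= s ^+ 2 by rewrite expr2 ler_peMl //; lra.
have half e : 0 <= e <= d + 1 -> (2 %| (N%:Z + e))%Z -> 1 / 2 <= cw N s e ^+ 2.
  move=> /andP[e0 ed] he; have es : `|e%:~R| <= s.
    by rewrite ger0_norm ?ler0z //; apply: le_trans hd; rewrite ler_int.
  rewrite cw_sqr // /supp_cw he /= intr_norm (le_trans es sq).
  exact: gauss_ge_half.
have := sqr_ge0 (cw N s d); have := sqr_ge0 (cw N s (d + 1)).
have [par|par] : (2 %| (N%:Z + d))%Z \/ (2 %| (N%:Z + (d + 1)))%Z by lia.
- have /half/(_ par) : 0 <= d <= d + 1 by lia.
  lra.
- have /half/(_ par) : 0 <= d + 1 <= d + 1 by lia.
  lra.
Qed.

Lemma ZN2_ge : 1 <= s -> s / 8 <= ZN2.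
Proof.
move=> s1; set L := Num.floor s.
have L1 : 1 <= L by rewrite floor_ge_int.
have Ls : L%:~R <= s := floor_le s.
have sL : s < (L + 1)%:~R := lt_succ_floor s.
have LM : L <= M.
  by rewrite floor_ge_int (le_trans Ls) // expr2 ler_peMl //; lra.
clearbody L; have M0 := Msig_ge0.
have nonneg d : - M <= d <= M -> 0 <= cw N s d ^+ 2 by move=> _; apply: sqr_ge0.
have hsum : zsum 0 (L - 1) (fun=> 1 / 2 : R)
             <= zsum 0 (L - 1) (fun d => cw N s d ^+ 2 + cw N s (d + 1) ^+ 2).
  apply: ler_zsum => d hd; apply: cw_sqr_pair_ge => //; first lia.
  by apply: le_trans Ls; rewrite ler_int; lia.
rewrite zsum_const in hsum; last by lia.
rewrite (_ : L - 1 + 1 - 0 = L) in hsum; last by ring.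
rewrite zsumD (zsum_shift _ _ _ (fun d => cw N s d ^+ 2)) in hsum.
have h1 : zsum 0 (L - 1) (fun d => cw N s d ^+ 2) <= ZN2.
  by apply: ler_zsum_widen => //; lia.
have h2 : zsum (0 + 1) (L - 1 + 1) (fun d => cw N s d ^+ 2) <= ZN2.
  by apply: ler_zsum_widen => //; lia.
have : s <= 2 * L%:~R.
  have : 1 <= L%:~R :> R by rewrite ler1z.
  move: sL; rewrite intrD /=; lra.
lra.
Qed.

Lemma ZN2_gt0 : 1 <= s -> 0 < ZN2.
Proof. by move=> s1; apply: lt_le_trans (ZN2_ge s1); lra. Qed.

Lemma cN_mul d d' : 1 <= s -> cN N s d * cN N s d' = cw N s d * cw N s d' / ZN2.
Proof.
move=> s1; have E0 := ZN2_gt0 s1.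
rewrite /cN ZN_sqrt -[in RHS](sqr_sqrtr (ltW E0)).
by field; rewrite gt_eqF // sqrtr_gt0.
Qed.

Lemma cN_sqr d : 1 <= s -> `|cN N s d| ^+ 2 = cw N s d ^+ 2 / ZN2.
Proof. by move=> s1; rewrite real_normK ?num_real // !expr2 cN_mul. Qed.

End Coefficients.

Section Geometric.
Variables (R : realType) (s : R).

Lemma zsum_expR_geometric (m : int) : 1 <= s -> 0 <= m ->
  zsum 0 m (fun d => expR (- (`|d%:~R| / s))) <= s + 1.
Proof.
move=> s1 m0; have s0 : 0 < s by lra.
set q := expR (- (1 / s)); have q0 : 0 < q := expR_gt0 _.
have q1 : q * (s + 1) <= s.
  have e : q * expR (1 / s) = 1 by rewrite -expRD addNr expR0.
  have h : q * (1 + 1 / s) <= q * expR (1 / s) by rewrite ler_wpM2l ?expR_ge1Dx // ltW.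
  rewrite e in h.
  rewrite (_ : q * (s + 1) = s * (q * (1 + 1 / s))); last by field; rewrite gt_eqF.
  by rewrite -[X in _ <= X]mulr1 ler_wpM2l // ltW.
rewrite zsum_count ?subr0; last by lia.
have -> : \sum_(k < absz (m + 1)%R) expR (- (`|(0 + k%:Z)%:~R| / s)) =
          series (geometric 1 q) (absz (m + 1)%R).
  rewrite seriesEord /=; apply: eq_bigr => k _.
  by rewrite add0r mul1r /q -expRM_natl ger0_norm // -[k%:Z%:~R]pmulrn mulrN mulrA mulr1.
have q_lt1 : q < 1 by rewrite expR_lt1 oppr_lt0 divr_gt0.
apply: le_trans (geometric_le_lim _ ler01 q0 _) _; first by rewrite gtr0_norm.
by rewrite ler_pdivrMr ?subr_gt0 //; lra.
Qed.

Lemma zsum_expR_abs_le (m : int) : 1 <= s -> 0 <= m ->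
  zsum (- m) m (fun d => expR (- (`|d%:~R| / s))) <= 4 * s.
Proof.
move=> s1 m0; set f := fun d : int => expR (- (`|d%:~R| / s)).
rewrite (@zsum_split _ (- m) (- 1) m) ?addNr; [|lia|lia].
have -> : zsum (- m) (- 1) f = zsum 1 m f.
  rewrite -zsum_opp; apply: eq_zsum => d.
  by rewrite /f intrN normrN.
have f0 d : 0 <= d <= m -> 0 <= f d by move=> _; apply: expR_ge0.
have h1 : zsum 1 m f <= zsum 0 m f by apply: ler_zsum_widen.
have := zsum_expR_geometric s1 m0; rewrite -/f.
lra.
Qed.

End Geometric.

Section Moments.
Variables (R : realType) (N : nat) (s : R).

Local Notation M := (Msig s).

Lemma cw_moment_le (n : nat) d : 1 <= s ->
  (d%:~R : R) ^+ (2 * n) * cw N s d ^+ 2 <=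
  (2 * n)`!%:R * s ^+ (2 * n) * (expR 4 * cw N s d ^+ 2 + expR (- (`|d%:~R| / s))).
Proof.
move=> s1; have s0 : 0 < s by lra.
set x := `|d%:~R| / s; have x0 : 0 <= x by rewrite divr_ge0 // ltW.
have ds : `|d%:~R| = s * x by rewrite /x mulrC divfK // gt_eqF.
have -> : (d%:~R : R) ^+ (2 * n) = s ^+ (2 * n) * x ^+ (2 * n).
  by rewrite -exprMn -ds !exprM real_normK ?num_real.
have hc : expR x * cw N s d ^+ 2 <= expR 4 * cw N s d ^+ 2 + expR (- x).
  rewrite cw_sqr //; case: ifP => _; last by rewrite !mulr0 add0r expR_ge0.
  rewrite (_ : gauss s d%:~R = expR (- x ^+ 2 / 2)); first exact: expR_mul_gauss_le.
  by rewrite /gauss -(real_normK (num_real d%:~R)) ds; congr expR; field; rewrite gt_eqF.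
have sn : 0 <= s ^+ (2 * n) by rewrite exprn_ge0 // ltW.
have h1 : x ^+ (2 * n) * cw N s d ^+ 2 <= (2 * n)`!%:R * (expR x * cw N s d ^+ 2).
  by rewrite mulrA ler_wpM2r ?sqr_ge0 ?pow_le_fact_expR.
have h2 : (2 * n)`!%:R * (expR x * cw N s d ^+ 2) <=
          (2 * n)`!%:R * (expR 4 * cw N s d ^+ 2 + expR (- x)) by rewrite ler_wpM2l.
by rewrite -mulrA [_ * s ^+ _]mulrC -mulrA ler_wpM2l // (le_trans h1 h2).
Qed.

Lemma cN_even_moment_le (n : nat) : 1 <= s ->
  zsum (- M) M (fun d => (d%:~R : R) ^+ (2 * n) * `|cN N s d| ^+ 2)
  <= ((2 * n)`!%:R * (expR 4 + 32)) * s ^+ (2 * n).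
Proof.
move=> s1; have E0 := ZN2_gt0 N s1; have E8 := ZN2_ge N s1.
set K : R := (2 * n)`!%:R * s ^+ (2 * n).
have K0 : 0 <= K by rewrite mulr_ge0 // exprn_ge0 //; lra.
rewrite (eq_zsum _ _ (G := fun d => (d%:~R ^+ (2 * n) * cw N s d ^+ 2) / ZN2 N s));
  last by move=> d; rewrite cN_sqr // mulrA.
rewrite zsumMr ler_pdivrMr //; apply: le_trans (ler_zsum (fun d _ => cw_moment_le n d s1)) _.
rewrite (eq_zsum _ _ (G := fun d => (cw N s d ^+ 2 * expR 4 + expR (- (`|d%:~R| / s))) * K));
  last by move=> d; rewrite /K; ring.
rewrite zsumMr zsumD zsumMr -/(ZN2 N s) mulrC.
rewrite [X in _ <= X](_ : _ = K * ((expR 4 + 32) * ZN2 N s)); last by rewrite /K; ring.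
rewrite ler_wpM2l //; have := zsum_expR_abs_le s1 (Msig_ge0 s); lra.
Qed.

Lemma cNN d : cN N s (- d) = cN N s d.
Proof. by rewrite /cN cwN. Qed.

Lemma cN_odd_moment (n : nat) :
  zsum (- M) M (fun d => (d%:~R : R) ^+ (2 * n + 1) * `|cN N s d| ^+ 2) = 0.
Proof.
apply: zsum_odd => d; rewrite cNN intrN addn1 !exprS exprM sqrrN -exprM.
by rewrite !mulNr.
Qed.

End Moments.

Section Overlap.
Variables (R : realType) (N : nat) (s : R) (k : int).

Local Notation M := (Msig s).
Local Notation E := (ZN2 N s).
Local Notation X := (zsum (- M) M (fun d => cw N s d * cw N s (d + k * 2))).

Lemma zsum_cw_shift_sqr_le j : zsum (- M) M (fun d => cw N s (d + j) ^+ 2) <= E.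
Proof.
wlog j0 : j / 0 <= j => [W|].
  case: (lerP 0 j) => [|j0]; first exact: W.
  rewrite (eq_zsum _ _ (G := fun d => (fun e => cw N s (e + - j) ^+ 2) (- d))).
    by rewrite (zsum_opp _ _ (fun e => cw N s (e + - j) ^+ 2)) opprK W // oppr_ge0 ltW.
  by move=> d; rewrite -cwN opprD.
have M0 := Msig_ge0 s.
have out d : M < d -> cw N s d ^+ 2 = 0 by move=> hd; rewrite cw_out ?expr0n //; lia.
rewrite (zsum_shift _ _ _ (fun d => cw N s d ^+ 2)) (@zsum_widenr _ _ _ M); last 2 first.
- by move=> d _ hd; apply: out; lia.
- by move=> d _ hd; apply: out.
by apply: ler_zsum_widen => [d _||]; rewrite ?sqr_ge0 //; lia.
Qed.

Lemma cw_overlap_le : X <= E.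
Proof.
have amgm (x y : R) : x * y <= (x ^+ 2 + y ^+ 2) / 2.
  by have := sqr_ge0 (x - y); nra.
apply: le_trans (ler_zsum (fun d _ => amgm _ _)) _.
rewrite (eq_zsum _ _ (G := fun d => (cw N s d ^+ 2 + cw N s (d + k * 2) ^+ 2) * 2^-1)) //.
rewrite zsumMr zsumD -/(ZN2 N s); have := zsum_cw_shift_sqr_le (k * 2); lra.
Qed.

Lemma cw_overlap_ge0 : 0 <= X.
Proof. by apply: zsum_ge0 => d _; rewrite mulr_ge0 ?cw_ge0. Qed.

Lemma zsum_gauss_shift_ge (y : R) : 0 < s ->
  gauss s y * E <= zsum (- M) M (fun d => if supp_cw N s d then gauss s (d%:~R + y) else 0).
Proof.
move=> s0; set S := fun y => zsum (- M) M
  (fun d => if supp_cw N s d then gauss s (d%:~R + y) else 0).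
have SN : S (- y) = S y.
  rewrite /S (eq_zsum _ _ (G := fun d =>
    (fun e => if supp_cw N s e then gauss s (e%:~R + y) else 0) (- d))).
    by rewrite (zsum_opp _ _ (fun e => if supp_cw N s e then gauss s (e%:~R + y) else 0)) opprK.
  by move=> d; rewrite supp_cwN intrN -gaussN opprD opprK.
have : 2 * (gauss s y * E) <= S y + S (- y).
  rewrite /S -zsumD (_ : 2 * (gauss s y * E) =
    zsum (- M) M (fun d => cw N s d ^+ 2 * (2 * gauss s y))); last first.
    by rewrite zsumMr -/(ZN2 N s); ring.
  apply: ler_zsum => d _; rewrite cw_sqr //; case: ifP => _; last by rewrite mul0r addr0.
  by rewrite mulrCA [gauss s d%:~R * _]mulrC; apply: gauss_shift_pair.
rewrite SN -/(S y); lra.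
Qed.

(* When [d + 2k] leaves the window, [|d + k| >= s^2/2] and the Gaussian factor is negligible. *)
Lemma cw_overlap_pt_ge d : 0 < s -> 2 * `|k%:~R| <= s ^+ 2 ->
  gauss s k%:~R * (if supp_cw N s d then gauss s (d%:~R + k%:~R) else 0)
    - expR (- s ^+ 2 / 8) <= cw N s d * cw N s (d + k * 2).
Proof.
move=> s0 hk; have e0 := expR_ge0 (- s ^+ 2 / 8).
rewrite [cw N s d]cwE; case hd: (supp_cw N s d); last by rewrite mulr0 !mul0r sub0r oppr_le0.
have hpar : (2 %| (N%:Z + (d + k * 2)))%Z by move: hd => /andP[h _]; lia.
rewrite cwE /supp_cw hpar /= intr_norm intrD intrM.
case: ifP => hin.
  rewrite (_ : expR _ * expR _ = gauss s k%:~R * gauss s (d%:~R + k%:~R)).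
    by rewrite lerBlDr lerDl.
  by rewrite /gauss -!expRD; congr expR; field; rewrite gt_eqF.
rewrite mulr0 subr_le0; apply: le_trans (_ : gauss s (d%:~R + k%:~R) <= _).
  by rewrite ler_piMl ?gauss_ge0 ?gauss_le1.
apply: gauss_tail => //.
have : `|d%:~R + k%:~R * 2%:~R| <= `|d%:~R + k%:~R| + `|k%:~R : R|.
  by rewrite (_ : _ + _ * _ = (d%:~R + k%:~R) + k%:~R) ?ler_normD //; ring.
move/negbT: hin; rewrite -ltNge; lra.
Qed.

Lemma cw_overlap_ge : 1 <= s -> 2 * `|k%:~R| <= s ^+ 2 ->
  gauss s k%:~R ^+ 2 * E - 3 * s ^+ 2 * expR (- s ^+ 2 / 8) <= X.
Proof.
move=> s1 hk; have s0 : 0 < s by lra.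
have M0 := Msig_ge0 s.
have hM : (M + 1 - - M)%:~R <= 3 * s ^+ 2 :> R.
  have Ms : M%:~R <= s ^+ 2 by apply: floor_le.
  have : 1 <= s ^+ 2 by rewrite expr_ge1 //; lra.
  by rewrite (_ : M + 1 - - M = M * 2 + 1) ?intrD ?intrM //=; lra.
set e := expR (- s ^+ 2 / 8); set a := gauss s k%:~R.
set T := fun d => if supp_cw N s d then gauss s (d%:~R + k%:~R) else 0.
have hX : zsum (- M) M (fun d => T d * a + - e) <= X.
  by apply: ler_zsum => d _; rewrite mulrC; apply: cw_overlap_pt_ge.
rewrite zsumD zsumMr zsum_const ?mulrN in hX; last by lia.
have hT : a * (a * E) <= a * zsum (- M) M T.
  by rewrite ler_wpM2l ?gauss_ge0 ?zsum_gauss_shift_ge.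
have he : (M + 1 - - M)%:~R * e <= 3 * s ^+ 2 * e by rewrite ler_wpM2r ?expR_ge0.
rewrite expr2 -mulrA; lra.
Qed.

Lemma cw_overlap_defect : 1 <= s ->
  (E - X) * s ^+ 2 <= (k%:~R ^+ 2 + 6145) * E.
Proof.
move=> s1; have s0 : 0 < s by lra.
have E8 := ZN2_ge N s1; have X0 := cw_overlap_ge0; have XE := cw_overlap_le.
have s2 : 1 <= s ^+ 2 by rewrite expr_ge1 //; lra.
have k2 : 2 * `|k%:~R| <= k%:~R ^+ 2 + 1 :> R.
  by rewrite -real_normK ?num_real //; have := sqr_ge0 (`|k%:~R : R| - 1); lra.
case: (lerP (2 * `|k%:~R|) (s ^+ 2)) => hk; last first.
  have : (E - X) * s ^+ 2 <= E * (2 * `|k%:~R|) by rewrite ler_pM //; lra.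
  have : E * (2 * `|k%:~R|) <= E * (k%:~R ^+ 2 + 1) by rewrite ler_wpM2l //; lra.
  lra.
set e := expR (- s ^+ 2 / 8); set u := 1 - gauss s k%:~R ^+ 2.
have h1 : E - X <= u * E + 3 * s ^+ 2 * e.
  by rewrite /u mulrBl mul1r; have := cw_overlap_ge s1 hk; rewrite -/e; lra.
have h2 : (E - X) * s ^+ 2 <= (u * s ^+ 2) * E + 3 * ((s ^+ 2) ^+ 2 * e).
  rewrite (_ : u * s ^+ 2 * E + _ = (u * E + 3 * s ^+ 2 * e) * s ^+ 2); last by ring.
  by rewrite ler_wpM2r //; lra.
have h3 : (u * s ^+ 2) * E <= k%:~R ^+ 2 * E.
  apply: ler_wpM2r; first lra.
  by rewrite -ler_pdivlMr ?exprn_gt0 // /u; have := sqr_gauss_ge k%:~R s0; lra.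
have := sqr_mul_expR_le (sqr_ge0 s); rewrite -/e; lra.
Qed.

Lemma cN_overlap_err : 1 <= s ->
  `|zsum (- M) M (fun d => cN N s d * cN N s (d + k * 2)) - 1|
    <= (k%:~R ^+ 2 + 6145) / s ^+ 2.
Proof.
move=> s1; have E0 := ZN2_gt0 N s1; have s2 : 0 < s ^+ 2 by rewrite exprn_gt0 //; lra.
rewrite (eq_zsum _ _ (G := fun d => cw N s d * cw N s (d + k * 2) / E)); last first.
  by move=> d; rewrite cN_mul.
have XE := cw_overlap_le; have X0 := cw_overlap_ge0.
rewrite zsumMr ler0_norm ?subr_le0 ?ler_pdivrMr ?mul1r // opprB.
rewrite (_ : 1 - X / E = (E - X) / E); last by field; rewrite gt_eqF.
by rewrite ler_pdivrMr // mulrAC ler_pdivlMr // cw_overlap_defect.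
Qed.

Lemma cN_overlap_floor_err : 1 <= s ->
  `|zsum (- M) (Num.floor (s ^+ 2 - (k * 2)%:~R))
      (fun d => cN N s d * cN N s (d + k * 2)) - 1| <= (k%:~R ^+ 2 + 6145) / s ^+ 2.
Proof.
move=> s1; rewrite -intrN floorDrz ?intr_int // intrKfloor -/(Msig s).
rewrite -(@zsum_widenr _ _ M) ?cN_overlap_err // => d _ hd.
- by rewrite /cN (@cw_out _ _ _ d) ?mulr0 ?mul0r //; lia.
- by rewrite /cN (@cw_out _ _ _ (d + k * 2)) ?mulr0 //; lia.
Qed.

End Overlap.

Theorem lemma4p5 (R : realType) (C : R) :
  (forall n : nat, exists Cn : R, forall (N : nat) (s : R),
      (1 <= N)%N -> 1 <= s -> s <= C * Num.sqrt (N%:R) ->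
      zsum (- Msig s) (Msig s)
        (fun d => (d%:~R : R) ^+ (2 * n) * `|cN N s d| ^+ 2) <= Cn * s ^+ (2 * n)
      /\ zsum (- Msig s) (Msig s)
        (fun d => (d%:~R : R) ^+ (2 * n + 1) * `|cN N s d| ^+ 2) = 0)
  /\
  (forall kappa : int, (2 %| kappa)%Z -> exists C' : R, forall (N : nat) (s : R),
      (1 <= N)%N -> 1 <= s -> s <= C * Num.sqrt (N%:R) ->
      `| zsum (- Msig s) (Num.floor (s ^+ 2 - kappa%:~R))
            (fun d => cN N s d * cN N s (d + kappa)) - 1 | <= C' / s ^+ 2).
Proof.
split.
  move=> n; exists ((2 * n)`!%:R * (expR 4 + 32)) => N s _ s1 _.
  by split; [apply: cN_even_moment_le | apply: cN_odd_moment].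
move=> kappa /dvdzP[k ->]; exists (k%:~R ^+ 2 + 6145) => N s _ s1 _.
exact: cN_overlap_floor_err.
Qed.
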